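(* Let $J$ and $K$ be nonempty standard subsets of $\{1,\dots,t\}$ such that for every $i\in K$ we have $i\in J$ or $i-1\in J$. Then $\mathrm{Ext}^1_{\mathcal A_{t,1}}(\Delta(K),\Delta(J))=0$.
   Context: Let $k$ be an algebraically closed field and $t\ge 3$ an integer. $\mathcal A_{t,1}$ is the quotient of the path algebra over $k$ of the quiver with vertices $1,\dots,t$, arrows $\alpha_i:i\to i+1$ ($1\le i\le t-1$) and $\beta_j:j+2\to j$ ($1\le j\le t-2$), by the relations $\beta_1\alpha_2=0$ and $\beta_{i+1}\alpha_{i+2}=\alpha_i\beta_i$ for $1\le i\le t-3$ (compositions of linear maps, written right to left). Modules are finite-dimensional and identified with representations $(M_i;\alpha_i,\beta_j)$ of the quiver satisfying these relations. A subset $J\subseteq\{1,\dots,t\}$ is standard if $j\in J$ implies $j+1\notin J$. For a nonempty standard subset $J$, the standard module $\Delta(J)$ has $\Delta(J)_i=k^{l}$ where $l=\#\{j\in J: j\le i\}$, with standard basis $e_1,\dots,e_l$; each $\alpha_i$ is the natural inclusion $e_h\mapsto e_h$, and each $\beta_j$ sends $e_h\mapsto e_{h-1}$ for $h\ge 2$ and $e_1\mapsto 0$. *)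

(* Representations of the bound quiver of A_{t,1} over a field,
   with linear maps acting on ROW vectors: a map V_i -> V_j is a matrix
   'M_(dim i, dim j), and x |-> x *m A. Composition "b after a" is a *m b. *)
From HB Require Import structures.
From mathcomp Require Import all_boot all_order all_algebra.
Set Implicit Arguments. Unset Strict Implicit. Unset Printing Implicit Defensive.
Import GRing.Theory.
Local Open Scope ring_scope.

Section Reps.
Variables (k : fieldType) (t : nat).

(* vertices are 1..t; alpha_i : i -> i+1 ; beta_j : j+2 -> j *)
Record rep := Rep {
  rdim : nat -> nat;
  ral : forall i, 'M[k]_(rdim i, rdim i.+1);
  rbe : forall j, 'M[k]_(rdim j.+2, rdim j) }.

(* a representation of the bound quiver: spaces only at vertices 1..t,
   relations beta_1 alpha_2 = 0 and beta_{i+1} alpha_{i+2} = alpha_i beta_i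
   for 1 <= i <= t-3 (compositions written right to left). *)
Definition is_rep (M : rep) : Prop :=
  [/\ forall i, (i == 0)%N || (t < i)%N -> rdim M i = 0%N,
      ral M 2 *m rbe M 1 = 0
    & forall i, (1 <= i)%N -> (i <= t - 3)%N ->
        ral M i.+2 *m rbe M i.+1 = rbe M i *m ral M i].

Definition is_hom (M N : rep) (f : forall i, 'M[k]_(rdim M i, rdim N i)) : Prop :=
  (forall i, (1 <= i)%N -> (i < t)%N -> ral M i *m f i.+1 = f i *m ral N i) /\
  (forall j, (1 <= j)%N -> (j.+2 <= t)%N -> rbe M j *m f j = f j.+2 *m rbe N j).

(* Ext^1(M, N) = 0 : every short exact sequence 0 -> N -f-> E -g-> M -> 0
   of representations of the bound quiver splits. *)
Definition Ext1_zero (M N : rep) : Prop :=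
  forall (E : rep) (f : forall i, 'M[k]_(rdim N i, rdim E i))
         (g : forall i, 'M[k]_(rdim E i, rdim M i)),
    is_rep E -> is_hom f -> is_hom g ->
    (forall i, (1 <= i <= t)%N ->
       [/\ row_free (f i), row_full (g i), f i *m g i = 0
         & (kermx (g i) <= f i)%MS]) ->
    exists s : forall i, 'M[k]_(rdim M i, rdim E i),
      is_hom s /\ (forall i, (1 <= i <= t)%N -> s i *m g i = 1%:M).

(* standard subsets of {1,...,t}, encoded as subsets of 'I_t.+1 avoiding 0 *)
Definition standard (J : {set 'I_t.+1}) : Prop :=
  ord0 \notin J /\
  forall j j' : 'I_t.+1, j \in J -> j' \in J -> (j' : nat) <> (j : nat).+1.

Definition std_dim (J : {set 'I_t.+1}) (i : nat) : nat :=
  if (1 <= i <= t)%N then #|[set j in J | ((j : nat) <= i)%N]| else 0%N.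

(* standard module Delta(J): alpha = natural inclusion e_h |-> e_h,
   beta : e_h |-> e_{h-1} (h >= 2), e_1 |-> 0  (0-based indices below) *)
Definition Delta (J : {set 'I_t.+1}) : rep :=
  @Rep (std_dim J)
    (fun i => \matrix_(r, c) ((r : nat) == (c : nat))%:R)
    (fun j => \matrix_(r, c) ((r : nat) == (c : nat).+1)%:R).

End Reps.

(* A section of g : E ->> Delta(K) is built vertex by vertex, as the images s_i(e_r)
   of the standard basis vectors of Delta(K)_i.  A basis vector already present at
   vertex i-1 is transported along alpha; the relations of the algebra then give the
   beta-squares for it by induction.  A basis vector new at vertex n+2 (so n+2 is in K)
   is lifted through g and corrected so that beta_n sends it to s_n(e_{r-1}): the
   defect lies in ker g_n = im f_n, and it is absorbed by f_{n+2} because beta_n of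
   Delta(J) is onto (split by the transposed shift), as n+1 or n+2 lies in J. *)
From HB Require Import structures.
From mathcomp Require Import all_boot all_order all_algebra.
From mathcomp Require Import zify.
Set Implicit Arguments. Unset Strict Implicit. Unset Printing Implicit Defensive.
Import GRing.Theory.

Section StandardDimensions.
Variable t : nat.
Implicit Type S : {set 'I_t.+1}.

Definition occurs S (m : nat) : bool := [exists j in S, (j : nat) == m].

Lemma occursP S m : reflect (exists2 j, j \in S & (j : nat) = m) (occurs S m).
Proof.
apply: (iffP existsP) => [[j /andP[jS /eqP jm]] | [j jS jm]]; exists j => //.
by rewrite jS; apply/eqP.
Qed.

Lemma card_occurs S m : #|[set j in S | (j : nat) == m]| = occurs S m.
Proof.
rewrite /occurs; case: existsP => [[j0 /andP[j0S /eqP <-]] | no_m] /=.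
  rewrite -(cards1 j0); apply: eq_card => j; rewrite !inE.
  by apply/andP/eqP => [[_ /eqP/val_inj] | ->] //; rewrite j0S.
apply/eqP; rewrite cards_eq0; apply/eqP/setP => j; rewrite !inE.
by apply/negP => jm; apply: no_m; exists j.
Qed.

Lemma standard_occursS S m : standard S -> occurs S m -> occurs S m.+1 = false.
Proof.
move=> [_ no_succ] /occursP[j jS jm].
by apply/occursP => -[j' j'S j'm]; apply: (no_succ j j') => //; rewrite j'm jm.
Qed.

Lemma std_dimE S i : standard S -> (i <= t)%N ->
  std_dim S i = #|[set j in S | (j : nat) <= i]|.
Proof.
move=> [S0 _] le_it; rewrite /std_dim le_it andbT.
case: i le_it => // _; apply/esym/eqP; rewrite cards_eq0; apply/eqP/setP => j.
rewrite !inE leqn0; apply/negP => /andP[jS /eqP j0].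
have j_ord0 : j = ord0 by apply: val_inj.
by move: S0; rewrite -j_ord0 jS.
Qed.

Lemma std_dimS S i : standard S -> (i < t)%N ->
  std_dim S i.+1 = (std_dim S i + occurs S i.+1)%N.
Proof.
move=> stdS lt_it; rewrite !std_dimE ?(ltnW lt_it) // -card_occurs -cardsUI.
have /eqP -> : #|[set j in S | (j : nat) <= i] :&: [set j in S | (j : nat) == i.+1]| == 0%N.
  rewrite cards_eq0; apply/eqP/setP => j; rewrite !inE andbACA andbb.
  by apply/negbTE/and3P => -[_ ji /eqP ji1]; move: ji; rewrite ji1 ltnn.
rewrite addn0; apply: eq_card => j.
by rewrite !inE -andb_orr orbC -leq_eqVlt.
Qed.

Lemma std_dim_leS S i : standard S -> (i < t)%N -> (std_dim S i <= std_dim S i.+1)%N.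
Proof. by move=> stdS lt_it; rewrite std_dimS ?leq_addr. Qed.

Lemma std_dim_ltS S i : standard S -> (i < t)%N ->
  (std_dim S i < std_dim S i.+1)%N = occurs S i.+1.
Proof. by move=> stdS lt_it; rewrite std_dimS // -[X in (X < _)%N]addn0 ltn_add2l lt0b. Qed.

Lemma std_dimSS_le S i : standard S -> (i.+2 <= t)%N ->
  (std_dim S i.+2 <= (std_dim S i).+1)%N.
Proof.
move=> stdS le_it.
rewrite !std_dimS ?(ltnW le_it) // -addnA -[(std_dim S i).+1]addn1 leq_add2l.
by case occ1 : (occurs S i.+1); rewrite ?(standard_occursS stdS occ1) ?leq_b1.
Qed.

End StandardDimensions.

Local Open Scope ring_scope.

Section ShiftMatrices.
Variable k : fieldType.

Definition unit_row m (r : nat) : 'rV[k]_m := \row_(c < m) ((c : nat) == r)%:R.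
Definition incl_mx m n : 'M[k]_(m, n) := \matrix_(r, c) ((r : nat) == c)%:R.
Definition shift_mx m n : 'M[k]_(m, n) := \matrix_(r, c) ((r : nat) == c.+1)%:R.
Definition pred_row n (u : nat -> 'rV[k]_n) (r : nat) : 'rV[k]_n :=
  if r is r'.+1 then u r' else 0.

Lemma unit_row_delta m (i : 'I_m) : unit_row m i = delta_mx 0 i.
Proof. by apply/rowP => c; rewrite !mxE. Qed.

Lemma mul_unit_row m n r (A : 'M[k]_(m, n)) (lt_rm : (r < m)%N) :
  unit_row m r *m A = row (Ordinal lt_rm) A.
Proof. by rewrite rowE -unit_row_delta. Qed.

Lemma mul_unit_row_matrix m n r (u : nat -> 'rV[k]_n) : (r < m)%N ->
  unit_row m r *m \matrix_(i < m) u i = u r.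
Proof. by move=> lt_rm; rewrite (mul_unit_row _ lt_rm) rowK. Qed.

Lemma row_incl_mx m n (r : 'I_m) : row r (incl_mx m n) = unit_row n r.
Proof. by apply/rowP => c; rewrite !mxE eq_sym. Qed.

Lemma row_shift_mx m n (r : 'I_m) :
  row r (shift_mx m n) = pred_row (unit_row n) r.
Proof. by case: r => [[|r] lt_rm]; apply/rowP => c; rewrite !mxE // eqSS eq_sym. Qed.

Lemma unit_row_incl m n r : (r < m)%N -> unit_row m r *m incl_mx m n = unit_row n r.
Proof. by move=> lt_rm; rewrite (mul_unit_row _ lt_rm) row_incl_mx. Qed.

Lemma unit_row_shift m n r : (r < m)%N ->
  unit_row m r *m shift_mx m n = pred_row (unit_row n) r.
Proof. by move=> lt_rm; rewrite (mul_unit_row _ lt_rm) row_shift_mx. Qed.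

Lemma trmx_shift_mxK m n : (n < m)%N -> (shift_mx m n)^T *m shift_mx m n = 1%:M.
Proof.
move=> lt_nm; apply/row_matrixP => c; rewrite row_mul row1 -unit_row_delta.
have -> : row c (shift_mx m n)^T = unit_row m c.+1.
  by apply/rowP => r; rewrite !mxE.
by rewrite unit_row_shift // (leq_ltn_trans (ltn_ord c)).
Qed.

End ShiftMatrices.

Section Splitting.
Variables (k : fieldType) (t : nat) (J K : {set 'I_t.+1}) (E : rep k).
Variables (f : forall i, 'M[k]_(rdim (Delta k J) i, rdim E i))
          (g : forall i, 'M[k]_(rdim E i, rdim (Delta k K) i)).

Local Notation dJ := (std_dim J).
Local Notation dK := (std_dim K).

Definition lift_row n (prev : nat -> 'rV[k]_(rdim E n)) r : 'rV[k]_(rdim E n.+2) :=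
  let y := unit_row k (dK n.+2) r *m pinvmx (g n.+2) in
  let defect := y *m rbe E n - pred_row prev r in
  y - defect *m pinvmx (f n) *m (shift_mx k (dJ n.+2) (dJ n))^T *m f n.+2.

Definition next_rows n (prev : nat -> 'rV[k]_(rdim E n))
    (cur : nat -> 'rV[k]_(rdim E n.+1)) r : 'rV[k]_(rdim E n.+2) :=
  if (r < dK n.+1)%N then cur r *m ral E n.+1 else lift_row prev r.

Fixpoint sec_row_pair n : (nat -> 'rV[k]_(rdim E n)) * (nat -> 'rV[k]_(rdim E n.+1)) :=
  if n is n'.+1 then
    ((sec_row_pair n').2, next_rows (sec_row_pair n').1 (sec_row_pair n').2)
  else (fun=> 0, fun r => unit_row k (dK 1) r *m pinvmx (g 1)).

Definition sec_row n := (sec_row_pair n).1.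

Definition sec i : 'M[k]_(rdim (Delta k K) i, rdim E i) := \matrix_(r < dK i) sec_row i r.

Lemma sec_rowSS n : sec_row n.+2 = next_rows (sec_row n) (sec_row n.+1).
Proof. by []. Qed.

Hypothesis E_rep : is_rep t E.
Hypothesis f_hom : is_hom t f.
Hypothesis g_hom : is_hom t g.
Hypothesis fg_exact : forall i, (1 <= i <= t)%N ->
  [/\ row_free (f i), row_full (g i), f i *m g i = 0 & (kermx (g i) <= f i)%MS].
Hypothesis J_std : standard J.
Hypothesis K_std : standard K.
Hypothesis K_covered : forall i : 'I_t.+1, i \in K ->
  i \in J \/ exists2 j : 'I_t.+1, j \in J & (j : nat).+1 = i.

Lemma dJ_ltSS n : (n.+2 <= t)%N -> (dK n.+1 < dK n.+2)%N -> (dJ n < dJ n.+2)%N.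
Proof.
move=> le_nt; rewrite std_dim_ltS // => /occursP[i iK ei].
have lt_nt := ltnW le_nt.
have [iJ | [j jJ ej]] := K_covered iK.
  apply: leq_ltn_trans (std_dim_leS J_std lt_nt) _.
  by rewrite std_dim_ltS //; apply/occursP; exists i.
apply: leq_trans (std_dim_leS J_std le_nt); rewrite std_dim_ltS //.
by apply/occursP; exists j => //; apply: succn_inj; rewrite ej ei.
Qed.

Lemma mulmx_pinv_g i m (y : 'M[k]_(m, dK i)) : (1 <= i <= t)%N ->
  y *m pinvmx (g i) *m g i = y.
Proof. by move=> it; rewrite mulmxKpV // submx_full //; case: (fg_exact it). Qed.

Lemma lift_row_g n prev r : (n.+2 <= t)%N ->
  lift_row prev r *m g n.+2 = unit_row k (dK n.+2) r.
Proof.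
move=> le_nt; have le_nt' : (1 <= n.+2 <= t)%N by rewrite le_nt.
rewrite /lift_row mulmxBl mulmx_pinv_g // -[_ *m f n.+2 *m _]mulmxA.
by case: (fg_exact le_nt') => _ _ -> _; rewrite mulmx0 subr0.
Qed.

Lemma lift_row_rbe n prev r : (1 <= n)%N -> (n.+2 <= t)%N ->
  (dJ n < dJ n.+2)%N -> (r < dK n.+2)%N ->
  pred_row prev r *m g n = pred_row (unit_row k (dK n)) r ->
  lift_row prev r *m rbe E n = pred_row prev r.
Proof.
move=> n_gt0 le_nt ltJ lt_r prev_g.
have nt : (1 <= n <= t)%N by lia.
have le_nt' : (1 <= n.+2 <= t)%N by lia.
rewrite /lift_row; set y := _ *m pinvmx (g n.+2); set defect := y *m _ - _.
have defect_ker : defect *m g n = 0.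
  rewrite mulmxBl prev_g -mulmxA (proj2 g_hom) // mulmxA mulmx_pinv_g //.
  by rewrite unit_row_shift // subrr.
have defect_im : (defect <= f n)%MS.
  by case: (fg_exact nt) => _ _ _; apply: submx_trans; apply/sub_kermxP.
have corr : defect *m pinvmx (f n) *m (shift_mx k _ _)^T *m f n.+2 *m rbe E n = defect.
  have shiftK : (shift_mx k _ _)^T *m rbe (Delta k J) n = 1%:M := trmx_shift_mxK k ltJ.
  rewrite -mulmxA -(proj2 f_hom) // mulmxA -(mulmxA _ _ (rbe _ _)) shiftK mulmx1.
  exact: mulmxKpV.
by rewrite mulmxBl corr /defect opprB addrC subrK.
Qed.

Lemma sec_row_ral i r : (1 <= i)%N -> (r < dK i)%N ->
  sec_row i r *m ral E i = sec_row i.+1 r.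
Proof. by case: i => // i _ lt_r; rewrite /= sec_rowSS /next_rows lt_r. Qed.

Lemma sec_row_g i r : (1 <= i <= t)%N -> (r < dK i)%N ->
  sec_row i r *m g i = unit_row k (dK i) r.
Proof.
elim: i r => [|i IH] r // it lt_r; case: i IH it lt_r => [|i] IH it lt_r.
  by rewrite mulmx_pinv_g.
rewrite sec_rowSS /next_rows; case: ifP => [old_r | _]; last exact: lift_row_g.
have it' : (1 <= i.+1 <= t)%N by lia.
by rewrite -mulmxA (proj1 g_hom) // mulmxA IH // unit_row_incl.
Qed.

Lemma sec_row_rbe j r : (1 <= j)%N -> (j.+2 <= t)%N -> (r < dK j.+2)%N ->
  sec_row j.+2 r *m rbe E j = pred_row (sec_row j) r.
Proof.
elim/ltn_ind: j r => j IH r j_gt0 le_jt lt_r.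
have le_r : (r <= dK j)%N by rewrite -ltnS (leq_trans lt_r) ?std_dimSS_le.
have [_ rel1 relS] := E_rep.
rewrite sec_rowSS /next_rows; case: ifP => [old_r | new_r]; last first.
  apply: lift_row_rbe => //.
    by apply: dJ_ltSS; rewrite // (leq_ltn_trans _ lt_r) // leqNgt new_r.
  by case: r {lt_r new_r} le_r => [|r] lt_r; rewrite ?mul0mx ?sec_row_g //; lia.
case: j IH j_gt0 le_jt lt_r le_r old_r => [|[|j]] IH // _ le_jt lt_r le_r old_r.
  have := leq_trans old_r (std_dimSS_le K_std (ltnW le_jt)).
  by case: r {lt_r le_r old_r} => // _; rewrite -mulmxA rel1 mulmx0.
have le_r1 : (r <= dK j.+1)%N.
  by rewrite -ltnS (leq_trans old_r) ?std_dimSS_le //; lia.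
rewrite -mulmxA relS //; last by lia.
rewrite mulmxA IH //; last by lia.
by case: r {lt_r le_r old_r} le_r1 => [|r] lt_r; rewrite ?mul0mx //= sec_row_ral.
Qed.

Lemma sec_hom : is_hom t sec.
Proof.
split=> [i i_gt0 lt_it | j j_gt0 le_jt]; apply/row_matrixP => r; rewrite !row_mul rowK.
  rewrite row_incl_mx mul_unit_row_matrix ?sec_row_ral //.
  by rewrite (leq_trans (ltn_ord r)) // std_dim_leS.
rewrite row_shift_mx sec_row_rbe //; case: r => [[|r] lt_r] //=; first by rewrite mul0mx.
by rewrite mul_unit_row_matrix // -ltnS (leq_trans lt_r) ?std_dimSS_le.
Qed.

Lemma sec_g i : (1 <= i <= t)%N -> sec i *m g i = 1%:M.
Proof.
by move=> it; apply/row_matrixP => r; rewrite row_mul rowK sec_row_g // row1 unit_row_delta.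
Qed.

End Splitting.

Theorem lemma2p6 (k : closedFieldType) (t : nat) (J K : {set 'I_t.+1}) :
  (3 <= t)%N ->
  @standard t J -> @standard t K ->
  J != set0 -> K != set0 ->
  (forall i : 'I_t.+1, i \in K ->
     i \in J \/ exists2 j : 'I_t.+1, j \in J & (j : nat).+1 = i) ->
  @Ext1_zero k t (@Delta k t K) (@Delta k t J).
Proof.
move=> _ J_std K_std _ _ K_covered E f g E_rep f_hom g_hom fg_exact.
by exists (sec f g); split; [exact: sec_hom | exact: sec_g].
Qed.
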